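(* Let $G=(V,E)$ be a finite, connected, non-bipartite $d$-regular graph. Then $$\beta_{out}(G)\;\geq\;\beta(G)\;\geq\;\tfrac{1}{d}\,\beta_{out}(G).$$
   Context: For $A,B\subseteq V$, $e(A,B)$ denotes the number of ordered pairs $(a,b)\in A\times B$ with $a\sim b$ (so $e(A,A)$ is twice the number of edges inside $A$). For $S\subseteq V$, $\partial(S)$ is the set of edges with exactly one endpoint in $S$, $\partial_{out}(S)$ is the set of vertices not in $S$ having a neighbor in $S$, and $I(S)$ is the number of vertices of $S$ having a neighbor in $S$. For disjoint $L,R\subseteq V$ with $L\cup R\neq\emptyset$, define $$b(L,R)=\frac{e(L,L)+e(R,R)+|\partial(L\cup R)|}{d\,|L\cup R|},\qquad b_{out}(L,R)=\frac{I(L)+I(R)+|\partial_{out}(L\cup R)|}{|L\cup R|}.$$ The bipartiteness constant is $\beta(G)=\min_{L,R} b(L,R)$ and the outer vertex bipartiteness constant is $\beta_{out}(G)=\min_{L,R} b_{out}(L,R)$, both minima over disjoint $L,R$ with $L\cup R\ne\emptyset$. *)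

From mathcomp Require Import all_boot all_order all_algebra.
Set Implicit Arguments. Unset Strict Implicit. Unset Printing Implicit Defensive.
Import Order.TTheory GRing.Theory Num.Theory.
Local Open Scope ring_scope.

(* A finite simple graph: vertex set T (a finType), adjacency e : rel T,
   assumed symmetric and irreflexive (see the theorem hypotheses). *)
Section Graph.
Variables (T : finType) (e : rel T).

Definition neighbours (v : T) : {set T} := [set u | e v u].

Definition regular (d : nat) : Prop := forall v : T, #|neighbours v| = d.

Definition connected : Prop := forall x y : T, connect e x y.

Definition bipartite : Prop :=
  exists S : {set T}, forall x y : T, e x y -> (x \in S) != (y \in S).

Definition eAB (A B : {set T}) : nat := #|[set p in setX A B | e p.1 p.2]|.

Definition boundary_size (S : {set T}) : nat := eAB S (~: S).

Definition out_boundary (S : {set T}) : {set T} :=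
  [set v in ~: S | [exists u in S, e v u]].

Definition inner (S : {set T}) : nat := #|[set v in S | [exists u in S, e v u]]|.

Definition b (d : nat) (L R : {set T}) : rat :=
  ((eAB L L + eAB R R + boundary_size (L :|: R))%:R)
  / ((d * #|L :|: R|)%:R).

Definition b_out (L R : {set T}) : rat :=
  ((inner L + inner R + #|out_boundary (L :|: R)|)%:R) / (#|L :|: R|%:R).

Definition admissible (p : {set T} * {set T}) : bool :=
  [disjoint p.1 & p.2] && (p.1 :|: p.2 != set0).

(* beta(G) = min over admissible (L,R) of b(L,R).  The default value of the
   big min is b(V, empty), which is itself admissible when V is nonempty,
   so this is exactly the minimum. *)
Definition beta (d : nat) : rat :=
  \big[Order.min/b d setT set0]_(p | admissible p) b d p.1 p.2.

Definition beta_out : rat :=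
  \big[Order.min/b_out setT set0]_(p | admissible p) b_out p.1 p.2.

End Graph.

From mathcomp Require Import all_boot all_order all_algebra.
Set Implicit Arguments. Unset Strict Implicit. Unset Printing Implicit Defensive.
Import Order.TTheory GRing.Theory Num.Theory.
Local Open Scope ring_scope.

(* Both bounds hold pair by pair, (1/d) b_out(L,R) <= b(L,R) <= b_out(L,R),
   and then pass to the minima.  The numerator of b is a sum of e(A,B) over
   the pairs (A,B) = (L,L), (R,R), (~S,S) with S = L :|: R (using the
   symmetry of e), while the numerator of b_out counts, for the same pairs,
   the vertices of A having a neighbour in B.  Such a vertex contributes at
   least 1 and, by regularity, at most d to e(A,B). *)

Lemma card_sep_sum (T : finType) (A : {set T}) (P : pred T) :
  #|[set a in A | P a]| = (\sum_(a in A) P a)%N.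
Proof.
rewrite -sum1_card [LHS]big_mkcond [RHS]big_mkcond /=.
by apply: eq_bigr => a _; rewrite !inE; case: (a \in A); case: (P a).
Qed.

Section NeighbourCounts.
Variables (T : finType) (e : rel T).

(* [inner e S] and [out_boundary e S] are, up to conversion, [#|touching S S|]
   and [touching (~: S) S]. *)
Definition touching (A B : {set T}) : {set T} := [set a in A | [exists u in B, e a u]].

Lemma eAB_sum (A B : {set T}) :
  eAB e A B = (\sum_(a in A) #|neighbours e a :&: B|)%N.
Proof.
rewrite /eAB -sum1_card.
rewrite (eq_bigr (fun a => \sum_(b in neighbours e a :&: B) 1)%N); last first.
  by move=> a _; rewrite sum1_card.
rewrite pair_big_dep /=; apply: eq_bigl => -[a b]; rewrite !inE /=.
by case: (a \in A); case: (b \in B); case: (e a b).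
Qed.

Lemma eAB_sym (A B : {set T}) : symmetric e -> eAB e A B = eAB e B A.
Proof.
move=> e_sym; rewrite /eAB -(card_preimset _ (can_inj swap_pairK)).
by apply: eq_card => -[a b]; rewrite !inE /= e_sym [(b \in A) && _]andbC.
Qed.

Lemma touching_le_eAB (A B : {set T}) : (#|touching A B| <= eAB e A B)%N.
Proof.
rewrite eAB_sum card_sep_sum; apply: leq_sum => a _.
case: existsP => //= -[u /andP [uB eau]]; rewrite card_gt0.
by apply/set0Pn; exists u; rewrite !inE eau uB.
Qed.

Lemma eAB_le_touching (d : nat) (A B : {set T}) :
  (forall v, #|neighbours e v| <= d)%N -> (eAB e A B <= d * #|touching A B|)%N.
Proof.
move=> deg_le; rewrite eAB_sum card_sep_sum big_distrr /=.
apply: leq_sum => a _; case: existsP => [_|no_nbr].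
  by rewrite muln1 (leq_trans _ (deg_le a)) // subset_leq_card // subsetIl.
rewrite muln0 leqn0 cards_eq0; apply/eqP/setP => u; rewrite !inE.
by apply/negP => /andP [eau uB]; apply: no_nbr; exists u; rewrite uB.
Qed.

Lemma b_out_numer_le_b_numer (L R : {set T}) : symmetric e ->
  (inner e L + inner e R + #|out_boundary e (L :|: R)|
    <= eAB e L L + eAB e R R + boundary_size e (L :|: R))%N.
Proof.
by move=> e_sym; rewrite /boundary_size eAB_sym // !leq_add ?touching_le_eAB.
Qed.

Lemma b_numer_le_b_out_numer (d : nat) (L R : {set T}) : symmetric e ->
  (forall v, #|neighbours e v| <= d)%N ->
  (eAB e L L + eAB e R R + boundary_size e (L :|: R)
    <= d * (inner e L + inner e R + #|out_boundary e (L :|: R)|))%N.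
Proof.
move=> e_sym deg_le; rewrite /boundary_size eAB_sym // !mulnDr.
by rewrite !leq_add ?eAB_le_touching.
Qed.

End NeighbourCounts.

Lemma ler_div_scaled (R : numFieldType) (m n c k : nat) :
  (m <= k * n)%N -> m%:R / (k * c)%:R <= n%:R / c%:R :> R.
Proof.
move=> le_m_kn; rewrite natrM invfM mulrA.
have [->|k_gt0] := posnP k; first by rewrite invr0 mulr0 mul0r divr_ge0.
by rewrite ler_wpM2r ?invr_ge0 // ler_pdivrMr ?ltr0n // -natrM mulnC ler_nat.
Qed.

Lemma ler_invn_div (R : numFieldType) (m n c k : nat) :
  (n <= m)%N -> k%:R^-1 * (n%:R / c%:R) <= m%:R / (k * c)%:R :> R.
Proof.
by move=> le_nm; rewrite natrM invfM mulrCA ler_wpM2r ?mulr_ge0 ?invr_ge0 ?ler_nat.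
Qed.

Section PairwiseBounds.
Variables (T : finType) (e : rel T) (d : nat).
Hypotheses (e_sym : symmetric e) (deg_le : forall v, (#|neighbours e v| <= d)%N).

Lemma b_le_b_out (L R : {set T}) : b e d L R <= b_out e L R.
Proof. exact/ler_div_scaled/b_numer_le_b_out_numer. Qed.

Lemma b_out_le_b (L R : {set T}) : d%:R^-1 * b_out e L R <= b e d L R.
Proof. exact/ler_invn_div/b_out_numer_le_b_numer. Qed.

End PairwiseBounds.

Theorem theorem2 (T : finType) (e : rel T) (d : nat)
  (e_sym : symmetric e) (e_irr : irreflexive e)
  (Hreg : regular e d) (Hconn : connected e) (Hnb : ~ bipartite e) :
  beta e d <= beta_out e /\ (d%:R)^-1 * beta_out e <= beta e d.
Proof.
have deg_le v : (#|neighbours e v| <= d)%N by rewrite Hreg.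
split.
  apply: le_bigmin => [|p adm_p]; apply: (le_trans _ (b_le_b_out e_sym deg_le _ _)).
    exact: bigmin_le_id.
  exact: bigmin_le_cond.
apply: le_bigmin => [|p adm_p]; apply: (le_trans _ (b_out_le_b d e_sym _ _));
  rewrite ler_wpM2l ?invr_ge0 //.
  exact: bigmin_le_id.
exact: bigmin_le_cond.
Qed.
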